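(* $$F^{1;2;2}_{1;1;1}\left[\left.\begin{matrix}2\\ \tfrac52\end{matrix};\begin{matrix}1,1\\ 2\end{matrix};\begin{matrix}\tfrac12,\tfrac12\\ 1\end{matrix}\right|1,1\right]=3\pi\log 2.$$
   Context: $(a)_n=\Gamma(a+n)/\Gamma(a)$. The Kampé de Fériet function is $$F^{A;B;B'}_{C;D;D'}\left[\left.\begin{matrix}a_1,\dots,a_A\\ c_1,\dots,c_C\end{matrix};\begin{matrix}b_1,\dots,b_B\\ d_1,\dots,d_D\end{matrix};\begin{matrix}b'_1,\dots,b'_{B'}\\ d'_1,\dots,d'_{D'}\end{matrix}\right|x,y\right]=\sum_{m,n\ge0}\frac{\prod_i(a_i)_{m+n}\prod_i(b_i)_m\prod_i(b'_i)_n}{\prod_i(c_i)_{m+n}\prod_i(d_i)_m\prod_i(d'_i)_n}\frac{x^my^n}{m!\,n!}.$$ *)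

From Stdlib Require Import Reals Arith.
Open Scope R_scope.

Fixpoint poch (a : R) (n : nat) : R :=
  match n with
  | O => 1
  | S k => poch a k * (a + INR k)
  end.

(* General term of F^{1;2;2}_{1;1;1}[2 / 5/2 ; 1,1 / 2 ; 1/2,1/2 / 1 | x, y]. *)
Definition kdf_term (x y : R) (m n : nat) : R :=
  (poch 2 (m + n) * (poch 1 m * poch 1 m) * (poch (1/2) n * poch (1/2) n))
  / (poch (5/2) (m + n) * poch 2 m * poch 1 n)
  * (x ^ m * y ^ n) / (INR (fact m) * INR (fact n)).

(* Double series summed along the diagonals m + n = k (the terms at x = y = 1
   are nonnegative, so this equals the sum in any order). *)
Definition kdf_diag (x y : R) (k : nat) : R :=
  sum_f_R0 (fun m => kdf_term x y m (k - m)%nat) k.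

From Stdlib Require Import Reals Arith Lra Lia Psatz.
From Coquelicot Require Import Coquelicot.
Open Scope R_scope.

(* At x = y = 1 the (m, n) term is c_n^2 (2)_{m+n} / ((5/2)_{m+n} (m + 1)), with
   c_n = binom(2n, n) / 4^n.  For fixed n the partial sums over m obey a first-order
   recurrence in n which telescopes at n = 0, and the n-th column sums to
   3 c_n h_{n+1} / (2n + 1), where h_k = sum_{j<k} 1 / (2j + 1).  It remains to show
   sum_n c_n h_{n+1} / (2n + 1) = pi ln 2.  Comparing coefficients with the series in
   sin^2 t of 1 / cos t, t / sin t and -ln (cos t) / cos t shows that
   T(t) = sum_n c_n h_{n+1} sin^{2n+1} t / (2n + 1) satisfies T'(t) = t cot t - ln cos t,
   so Phi(t) = T(t) - t ln sin t has Phi'(t) = -ln (sin t cos t).  Euler's reflection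
   and duplication argument for the integral of ln sin then yields Phi(pi/4) = (pi/2) ln 2
   and T(pi/2-) = pi ln 2; the coefficients being nonnegative, this Abelian limit is the
   sum of the series.  A double series with nonnegative terms may be summed by columns. *)

(** * Series with nonnegative terms *)

Lemma partial_sums_growing (u : nat -> R) :
  (forall n, 0 <= u n) -> Un_growing (fun N => sum_f_R0 u N).
Proof. intros Hu N; simpl; specialize (Hu (S N)); lra. Qed.

Lemma infinite_sum_of_sup (u : nat -> R) (L : R) :
  (forall n, 0 <= u n) ->
  (forall N, sum_f_R0 u N <= L) ->
  (forall eps, 0 < eps -> exists N, L - eps < sum_f_R0 u N) ->
  infinite_sum u L.
Proof.
intros Hu Hle Happrox eps Heps.
destruct (Happrox eps Heps) as [N HN].
exists N; intros n Hn.
pose proof (growing_prop _ n N (partial_sums_growing u Hu) Hn).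
pose proof (Hle n).
unfold Rdist; rewrite Rabs_left1; lra.
Qed.

Lemma sum_diagonals_by_columns (t : nat -> nat -> R) (K : nat) :
  sum_f_R0 (fun k => sum_f_R0 (fun m => t m (k - m)%nat) k) K
  = sum_f_R0 (fun n => sum_f_R0 (fun m => t m n) (K - n)%nat) K.
Proof.
induction K as [|K IH]; [reflexivity|].
rewrite tech5, IH, <- (sum_f_R0_skip (fun m => t m (S K - m)%nat)).
rewrite (tech5 (fun n => sum_f_R0 (fun m => t m n) (S K - n)%nat)), Nat.sub_diag.
rewrite (sum_eq (fun n => sum_f_R0 (fun m => t m n) (S K - n))
                (fun n => sum_f_R0 (fun m => t m n) (K - n) + t (S K - n)%nat n)).
2: { intros n Hn; replace (S K - n)%nat with (S (K - n)) by lia; reflexivity. }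
rewrite plus_sum, (tech5 (fun k => t (S K - k)%nat (S K - (S K - k))%nat)).
rewrite Nat.sub_diag, Nat.sub_0_r.
rewrite (sum_eq (fun k => t (S K - k)%nat (S K - (S K - k))%nat) (fun n => t (S K - n)%nat n)).
2: { intros k Hk; f_equal; lia. }
simpl; ring.
Qed.

Lemma Un_cv_sum_f_R0 (s : nat -> nat -> R) (l : nat -> R) (N : nat) :
  (forall n, Un_cv (s n) (l n)) ->
  Un_cv (fun M => sum_f_R0 (fun n => s n M) N) (sum_f_R0 l N).
Proof.
intros Hs; induction N as [|N IH]; [apply Hs|].
apply (CV_plus _ _ _ _ IH (Hs (S N))).
Qed.

Lemma infinite_sum_diagonals (t : nat -> nat -> R) (g : nat -> R) (L : R) :
  (forall m n, 0 <= t m n) ->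
  (forall n, infinite_sum (fun m => t m n) (g n)) ->
  infinite_sum g L ->
  infinite_sum (fun k => sum_f_R0 (fun m => t m (k - m)%nat) k) L.
Proof.
intros Ht Hcol Hg.
assert (Hcol_le : forall n M, sum_f_R0 (fun m => t m n) M <= g n).
{ intros n M; apply sum_incr; [apply Hcol | intros m; apply Ht]. }
assert (Hcol_grow : forall n, Un_growing (fun M => sum_f_R0 (fun m => t m n) M)).
{ intros n; apply partial_sums_growing; intros m; apply Ht. }
assert (Hg_nonneg : forall n, 0 <= g n).
{ intros n; apply Rle_trans with (t 0%nat n); [apply Ht | apply (Hcol_le n 0%nat)]. }
apply infinite_sum_of_sup.
- intros k; apply cond_pos_sum; intros m; apply Ht.
- intros K; rewrite sum_diagonals_by_columns.
  apply Rle_trans with (sum_f_R0 g K).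
  + apply sum_Rle; intros n _; apply Hcol_le.
  + apply sum_incr; assumption.
- intros eps Heps.
  destruct (Hg (eps / 2) ltac:(lra)) as [N HN].
  specialize (HN N (le_n N)); unfold Rdist in HN; apply Rabs_def2 in HN.
  destruct (Un_cv_sum_f_R0 _ _ N Hcol (eps / 2) ltac:(lra)) as [M HM].
  specialize (HM M (le_n M)); unfold Rdist in HM; apply Rabs_def2 in HM.
  exists (N + M)%nat; rewrite sum_diagonals_by_columns.
  (* the rectangle [0,M] x [0,N] lies inside the triangle m + n <= N + M *)
  assert (Hrect : sum_f_R0 (fun n => sum_f_R0 (fun m => t m n) M) N
                  <= sum_f_R0 (fun n => sum_f_R0 (fun m => t m n) (N + M - n)) (N + M)).
  { apply Rle_trans with (sum_f_R0 (fun n => sum_f_R0 (fun m => t m n) (N + M - n)) N).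
    - apply sum_Rle; intros n Hn; apply Rge_le, growing_prop; [apply Hcol_grow | lia].
    - apply Rge_le, (growing_prop (fun K => sum_f_R0 _ K)); [|lia].
      apply partial_sums_growing; intros n; apply cond_pos_sum; intros m; apply Ht. }
  lra.
Qed.

Lemma filterlim_Rplus {T : Type} {F : (T -> Prop) -> Prop} {FF : Filter F}
  (f g : T -> R) (lf lg : R) :
  filterlim f F (locally lf) -> filterlim g F (locally lg) ->
  filterlim (fun x => f x + g x) F (locally (lf + lg)).
Proof. intros Hf Hg; exact (filterlim_comp_2 _ _ _ Hf Hg (filterlim_plus lf lg)). Qed.

Lemma filterlim_Rmult {T : Type} {F : (T -> Prop) -> Prop} {FF : Filter F}
  (f g : T -> R) (lf lg : R) :
  filterlim f F (locally lf) -> filterlim g F (locally lg) ->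
  filterlim (fun x => f x * g x) F (locally (lf * lg)).
Proof. intros Hf Hg; exact (filterlim_comp_2 _ _ _ Hf Hg (filterlim_mult lf lg)). Qed.

Lemma filterlim_of_ex_derive (f : R -> R) (x : R) :
  ex_derive f x -> filterlim f (locally x) (locally (f x)).
Proof. exact (ex_derive_continuous f x). Qed.

Lemma filterlim_at_right_of_ex_derive (f : R -> R) (x : R) :
  ex_derive f x -> filterlim f (at_right x) (locally (f x)).
Proof.
intros H; apply (filterlim_filter_le_1 _ (filter_le_within (F := locally x) _)).
apply filterlim_of_ex_derive, H.
Qed.

Lemma at_right_interval (x d : R) : 0 < d -> at_right x (fun a => x < a < x + d).
Proof.
intros Hd; exists (mkposreal d Hd); intros a Ha Hxa.
apply Rabs_def2 in Ha; unfold minus, plus, opp in Ha; simpl in *; lra.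
Qed.

Lemma at_left_1_unit_interval : at_left 1 (fun z => 0 < z < 1).
Proof.
exists (mkposreal 1 Rlt_0_1); intros z Hz Hz1.
apply Rabs_def2 in Hz; unfold minus, plus, opp in Hz; simpl in *; lra.
Qed.

Lemma filterlim_half_at_right_0 : filterlim (fun a => a / 2) (at_right 0) (at_right 0).
Proof.
intros P [d Hd]; exists d; intros a Ha Hpos; apply Hd; [|lra].
apply Rabs_def2 in Ha; apply Rabs_def1; unfold minus, plus, opp in *; simpl in *; lra.
Qed.

Lemma filterlim_mul_ln_at_right_0 :
  filterlim (fun x => x * ln x) (at_right 0) (locally 0).
Proof.
apply (filterlim_ext_loc (fun x => -1 * (ln (/ x) / / x))).
- apply (filter_imp (fun x => 0 < x < 0 + 1)); [|apply at_right_interval; lra].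
  intros x Hx; rewrite ln_Rinv by lra; field; lra.
- assert (Hinv := filterlim_comp _ _ _ _ (fun y => ln y / y) _ _ _
                   filterlim_Rinv_0_right is_lim_div_ln_p).
  replace (locally 0) with (locally (-1 * 0)) by (f_equal; ring).
  apply filterlim_Rmult; [apply filterlim_const | exact Hinv].
Qed.

Lemma sin_ge_half (a : R) : 0 <= a <= 1 -> a / 2 <= sin a.
Proof.
intros Ha; pose proof PI2_1.
destruct (sin_bound a 0 ltac:(lra) ltac:(lra)) as [Hlb _].
unfold sin_approx, sin_term in Hlb; simpl in Hlb; nra.
Qed.

Lemma filterlim_mul_ln_sin_at_right_0 :
  filterlim (fun a => a * ln (sin a)) (at_right 0) (locally 0).
Proof.
apply (filterlim_le_le (fun a => a * ln a + a * - ln 2) _ (fun _ => 0) (Finite 0)).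
- apply (filter_imp (fun a => 0 < a < 0 + 1)); [|apply at_right_interval; lra].
  intros a Ha; pose proof (sin_ge_half a ltac:(lra)); pose proof (SIN_bound a).
  assert (ln (a / 2) <= ln (sin a) <= 0).
  { rewrite <- ln_1; split; apply ln_le; lra. }
  unfold Rdiv in *; rewrite ln_mult, ln_Rinv in * by lra; split; nra.
- replace (Finite 0) with (Finite (0 + 0 * - ln 2)) by (f_equal; ring).
  apply filterlim_Rplus; [exact filterlim_mul_ln_at_right_0|].
  apply filterlim_Rmult; [|apply filterlim_const].
  apply (filterlim_filter_le_1 _ (filter_le_within (F := locally 0) _)), filterlim_id.
- apply filterlim_const.
Qed.

Lemma is_derive_eq (f : R -> R) (x l l' : R) : is_derive f x l -> l = l' -> is_derive f x l'.
Proof. intros H ->; exact H. Qed.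

Lemma eq_of_is_derive_0 (f : R -> R) (lo hi x y : R) :
  (forall t, lo < t < hi -> is_derive f t 0) -> lo < x < hi -> lo < y < hi -> f x = f y.
Proof.
intros H Hx Hy.
destruct (Rtotal_order x y) as [Hlt | [-> | Hgt]]; [| reflexivity |].
- apply eq_is_derive; [intros t Ht; apply H; lra | exact Hlt].
- symmetry; apply eq_is_derive; [intros t Ht; apply H; lra | exact Hgt].
Qed.

(** * Power series on the unit disk *)

Lemma CV_radius_le_of_abs_le (a b : nat -> R) :
  (forall n, Rabs (b n) <= Rabs (a n)) -> Rbar_le (CV_radius a) (CV_radius b).
Proof.
intros Hba.
destruct (CV_radius_bounded a) as [_ Ha].
destruct (CV_radius_bounded b) as [Hb _].
apply Ha; intros r [M HM]; apply Hb; exists M; intros n.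
eapply Rle_trans; [|apply (HM n)].
rewrite !Rabs_mult; apply Rmult_le_compat_r; [apply Rabs_pos | apply Hba].
Qed.

Lemma CV_radius_ge_1 (a : nat -> R) :
  (forall n, Rabs (a n) <= INR n + 1) -> Rbar_le 1 (CV_radius a).
Proof.
intros Ha.
assert (Hgeom : CV_radius (fun _ : nat => 1) = / 1).
{ apply CV_radius_finite_DAlembert; [intros; lra | lra |].
  eapply is_lim_seq_ext; [|apply is_lim_seq_const].
  intros n; simpl; rewrite Rdiv_1_r, Rabs_R1; reflexivity. }
rewrite Rinv_1 in Hgeom.
(* [n + 1] is the coefficient sequence of the derivative of [1 / (1 - y)] *)
rewrite <- Hgeom, <- CV_radius_derive.
apply CV_radius_le_of_abs_le; intros n; unfold PS_derive.
rewrite Rmult_1_r, S_INR, (Rabs_pos_eq (INR n + 1)); [apply Ha|].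
pose proof (pos_INR n); lra.
Qed.

Lemma in_CV_radius_of_unit_disk (a : nat -> R) (y : R) :
  Rbar_le 1 (CV_radius a) -> Rabs y < 1 -> Rbar_lt (Rabs y) (CV_radius a).
Proof. intros Ha Hy; eapply Rbar_lt_le_trans; [|exact Ha]; exact Hy. Qed.

Lemma ex_pseries_of_unit_disk (a : nat -> R) (y : R) :
  Rbar_le 1 (CV_radius a) -> Rabs y < 1 -> ex_pseries a y.
Proof. intros Ha Hy; apply CV_radius_inside, in_CV_radius_of_unit_disk; assumption. Qed.

Lemma infinite_sum_PSeries (a : nat -> R) (y : R) :
  Rbar_lt (Rabs y) (CV_radius a) -> infinite_sum (fun n => a n * y ^ n) (PSeries a y).
Proof.
intros Hy; apply is_series_Reals, Series_correct, ex_series_Rabs, CV_disk_inside, Hy.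
Qed.

Lemma PSeries_index_mul (a : nat -> R) (y : R) :
  PSeries (fun n => INR n * a n) y = y * PSeries (PS_derive a) y.
Proof.
rewrite <- PSeries_incr_1; apply PSeries_ext.
intros [|n]; unfold PS_incr_1, PS_derive; simpl; [apply Rmult_0_l | reflexivity].
Qed.

Lemma ex_pseries_index_mul (a : nat -> R) (y : R) :
  Rbar_lt (Rabs y) (CV_radius a) -> ex_pseries (fun n => INR n * a n) y.
Proof.
intros Hy.
eapply ex_series_ext; [|apply ex_pseries_incr_1, ex_pseries_derive, Hy].
intros [|n]; unfold PS_incr_1, PS_derive; simpl; [now rewrite Rmult_0_l | reflexivity].
Qed.

Lemma PSeries_derive_ode (a b : nat -> R) (y : R) :
  Rbar_lt (Rabs y) (CV_radius a) ->
  (forall n, PS_derive a n = INR n * a n + b n) ->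
  (1 - y) * PSeries (PS_derive a) y = PSeries b y.
Proof.
intros Hy Hab.
rewrite (PSeries_ext b (PS_minus (PS_derive a) (fun n => INR n * a n))).
2: { intros n; unfold PS_minus, PS_plus, PS_opp, plus, opp; simpl; rewrite Hab; ring. }
rewrite PSeries_minus, PSeries_index_mul; [ring | |].
- apply ex_pseries_derive, Hy.
- apply ex_pseries_index_mul, Hy.
Qed.

Lemma PSeries_euler_ode (a d : nat -> R) (y : R) :
  Rbar_lt (Rabs y) (CV_radius a) ->
  (forall n, a n + 2 * (INR n * a n) = d n) ->
  PSeries a y + 2 * (y * PSeries (PS_derive a) y) = PSeries d y.
Proof.
intros Hy Had.
rewrite (PSeries_ext d (PS_plus a (PS_scal 2 (fun n => INR n * a n)))).
2: { intros n; unfold PS_plus, PS_scal, plus, scal; simpl; rewrite <- Had; reflexivity. }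
rewrite PSeries_plus, PSeries_scal, PSeries_index_mul; [reflexivity | |].
- apply CV_radius_inside, Hy.
- apply ex_pseries_scal; [apply Rmult_comm | apply ex_pseries_index_mul, Hy].
Qed.

Lemma pow_unit_interval (z : R) (n N : nat) :
  0 <= z <= 1 -> (n <= N)%nat -> 0 <= z ^ N <= z ^ n /\ z ^ n <= 1.
Proof.
intros Hz HnN.
pose proof (pow_le z (N - n) ltac:(lra)); pose proof (pow_le z n ltac:(lra)).
pose proof (pow_incr z 1 (N - n) ltac:(lra)); pose proof (pow_incr z 1 n ltac:(lra)).
rewrite pow1 in *; replace N with (n + (N - n))%nat by lia; rewrite pow_add; nra.
Qed.

Lemma partial_sum_le_PSeries (b : nat -> R) (z : R) (N : nat) :
  (forall n, 0 <= b n) -> Rbar_le 1 (CV_radius b) -> 0 <= z < 1 ->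
  z ^ N * sum_f_R0 b N <= sum_f_R0 (fun n => b n * z ^ n) N <= PSeries b z.
Proof.
intros Hb Hrad Hz; split.
- rewrite scal_sum; apply sum_Rle; intros n Hn.
  apply Rmult_le_compat_l; [apply Hb | apply (pow_unit_interval z n N ltac:(lra) Hn)].
- apply sum_incr.
  + apply infinite_sum_PSeries, in_CV_radius_of_unit_disk; [exact Hrad|].
    rewrite Rabs_pos_eq; lra.
  + intros n; apply Rmult_le_pos; [apply Hb | apply pow_le; lra].
Qed.

Lemma infinite_sum_of_Abel_limit {T : Type} {F : (T -> Prop) -> Prop} {FF : ProperFilter F}
  (b : nat -> R) (y : T -> R) (L : R) :
  (forall n, 0 <= b n) -> Rbar_le 1 (CV_radius b) ->
  filterlim y F (at_left 1) ->
  filterlim (fun x => PSeries b (y x)) F (locally L) ->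
  infinite_sum b L.
Proof.
intros Hb Hrad Hy HL.
assert (Hy01 : F (fun x => 0 < y x < 1)) by apply (Hy _ at_left_1_unit_interval).
apply infinite_sum_of_sup; [exact Hb | |].
- intros N.
  assert (Hlim : filterlim (fun x => y x ^ N * sum_f_R0 b N) F (locally (sum_f_R0 b N))).
  { apply (filterlim_comp _ _ _ y (fun z => z ^ N * sum_f_R0 b N) F (at_left 1)); [exact Hy|].
    apply (filterlim_filter_le_1 _ (filter_le_within (F := locally 1) _)).
    assert (Hcont := filterlim_of_ex_derive (fun z => z ^ N * sum_f_R0 b N) 1
                       ltac:(auto_derive; exact I)).
    cbv beta in Hcont; rewrite pow1, Rmult_1_l in Hcont; exact Hcont. }
  change (Rbar_le (sum_f_R0 b N) L).
  apply (filterlim_le (F := F) (fun x => y x ^ N * sum_f_R0 b N) (fun x => PSeries b (y x)));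
    [| exact Hlim | exact HL].
  apply (filter_imp (fun x => 0 < y x < 1)); [|exact Hy01].
  intros x Hx; pose proof (partial_sum_le_PSeries b (y x) N Hb Hrad ltac:(lra)); lra.
- intros eps Heps.
  assert (Hnear : F (fun x => 0 < y x < 1 /\ Rabs (PSeries b (y x) - L) < eps / 2)).
  { apply filter_and; [exact Hy01|].
    apply (HL (fun u => Rabs (u - L) < eps / 2)).
    exists (mkposreal (eps / 2) ltac:(lra)); intros u Hu; exact Hu. }
  destruct (filter_ex _ Hnear) as [x [Hx Hclose]].
  assert (Hsum : infinite_sum (fun n => b n * y x ^ n) (PSeries b (y x))).
  { apply infinite_sum_PSeries, in_CV_radius_of_unit_disk; [exact Hrad|].
    rewrite Rabs_pos_eq; lra. }
  destruct (Hsum (eps / 2) ltac:(lra)) as [M HM].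
  specialize (HM M (le_n M)); unfold Rdist in HM.
  apply Rabs_def2 in HM; apply Rabs_def2 in Hclose.
  assert (sum_f_R0 (fun n => b n * y x ^ n) M <= sum_f_R0 b M).
  { apply sum_Rle; intros n _; pose proof (Hb n).
    destruct (pow_unit_interval (y x) n n ltac:(lra) (le_n n)) as [_ Hpow]; nra. }
  exists M; lra.
Qed.

(** * The coefficient sequences *)

(* [cbinom n = binom(2n, n) / 4^n].  In the variable [y = sin t ^ 2], [cbinom], [asin_coef]
   and [lncos_coef] are the coefficients of [1 / cos t], [t / sin t] and
   [- ln (cos t) / cos t], and [asinH_coef] those of [asinH_gen t / sin t]. *)
Definition cbinom (n : nat) : R := poch (1/2) n / INR (fact n).

Fixpoint oddH (n : nat) : R :=
  match n with
  | O => 0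
  | S k => oddH k + / (2 * INR k + 1)
  end.

Lemma oddH_S (n : nat) : oddH (S n) = oddH n + / (2 * INR n + 1).
Proof. reflexivity. Qed.

Definition asin_coef (n : nat) : R := cbinom n / (2 * INR n + 1).
Definition lncos_coef (n : nat) : R := cbinom n * oddH n.
Definition asinH_coef (n : nat) : R := cbinom n * oddH (S n) / (2 * INR n + 1).

Lemma cbinom_0 : cbinom 0 = 1.
Proof. unfold cbinom; simpl; field. Qed.

Lemma cbinom_S (n : nat) : cbinom (S n) = cbinom n * (2 * INR n + 1) / (2 * INR n + 2).
Proof.
unfold cbinom; simpl poch; rewrite fact_simpl, mult_INR, S_INR.
pose proof (pos_INR n); pose proof (INR_fact_neq_0 n); field; lra.
Qed.

Lemma cbinom_pos (n : nat) : 0 < cbinom n.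
Proof.
induction n as [|n IH]; [rewrite cbinom_0; lra|].
rewrite cbinom_S; pose proof (pos_INR n).
apply Rdiv_lt_0_compat; [apply Rmult_lt_0_compat|]; lra.
Qed.

Lemma cbinom_le_1 (n : nat) : cbinom n <= 1.
Proof.
induction n as [|n IH]; [rewrite cbinom_0; lra|].
rewrite cbinom_S; pose proof (pos_INR n); pose proof (cbinom_pos n).
apply Rmult_le_reg_r with (2 * INR n + 2); [lra|].
unfold Rdiv; rewrite Rmult_assoc, Rinv_l; nra.
Qed.

Lemma inv_odd_bounds (n : nat) : 0 < / (2 * INR n + 1) <= 1.
Proof.
pose proof (pos_INR n); split; [apply Rinv_0_lt_compat; lra|].
rewrite <- Rinv_1; apply Rinv_le_contravar; lra.
Qed.

Lemma oddH_bounds (n : nat) : 0 <= oddH n <= INR n.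
Proof.
induction n as [|n IH]; simpl oddH; [simpl; lra|].
rewrite S_INR; pose proof (inv_odd_bounds n); lra.
Qed.

Lemma CV_radius_cbinom : Rbar_le 1 (CV_radius cbinom).
Proof.
apply CV_radius_ge_1; intros n; pose proof (cbinom_pos n); pose proof (cbinom_le_1 n).
pose proof (pos_INR n); rewrite Rabs_pos_eq; lra.
Qed.

Lemma CV_radius_asin_coef : Rbar_le 1 (CV_radius asin_coef).
Proof.
apply CV_radius_ge_1; intros n; unfold asin_coef, Rdiv.
pose proof (cbinom_pos n); pose proof (cbinom_le_1 n); pose proof (inv_odd_bounds n).
pose proof (pos_INR n); rewrite Rabs_pos_eq; nra.
Qed.

Lemma CV_radius_lncos_coef : Rbar_le 1 (CV_radius lncos_coef).
Proof.
apply CV_radius_ge_1; intros n; unfold lncos_coef.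
pose proof (cbinom_pos n); pose proof (cbinom_le_1 n); pose proof (oddH_bounds n).
rewrite Rabs_pos_eq; nra.
Qed.

Lemma CV_radius_asinH_coef : Rbar_le 1 (CV_radius asinH_coef).
Proof.
apply CV_radius_ge_1; intros n; unfold asinH_coef, Rdiv.
pose proof (cbinom_pos n); pose proof (cbinom_le_1 n); pose proof (inv_odd_bounds n).
pose proof (oddH_bounds (S n)); rewrite S_INR in *.
assert (0 <= cbinom n * oddH (S n) <= INR n + 1) by nra.
rewrite Rabs_pos_eq; nra.
Qed.

Lemma cbinom_ode (y : R) :
  Rabs y < 1 -> (1 - y) * PSeries (PS_derive cbinom) y = / 2 * PSeries cbinom y.
Proof.
intros Hy; rewrite <- (PSeries_scal (/ 2)).
apply PSeries_derive_ode; [exact (in_CV_radius_of_unit_disk _ _ CV_radius_cbinom Hy)|].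
intros n; change (INR (S n) * cbinom (S n) = INR n * cbinom n + / 2 * cbinom n).
rewrite cbinom_S, S_INR; pose proof (pos_INR n); field; lra.
Qed.

Lemma lncos_coef_ode (y : R) :
  Rabs y < 1 ->
  (1 - y) * PSeries (PS_derive lncos_coef) y
  = / 2 * (PSeries lncos_coef y + PSeries cbinom y).
Proof.
intros Hy; rewrite <- PSeries_plus, <- (PSeries_scal (/ 2));
  [| exact (ex_pseries_of_unit_disk _ _ CV_radius_lncos_coef Hy)
   | exact (ex_pseries_of_unit_disk _ _ CV_radius_cbinom Hy)].
apply PSeries_derive_ode; [exact (in_CV_radius_of_unit_disk _ _ CV_radius_lncos_coef Hy)|].
intros n; change (INR (S n) * lncos_coef (S n)
                  = INR n * lncos_coef n + / 2 * (lncos_coef n + cbinom n)).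
unfold lncos_coef; rewrite oddH_S, cbinom_S, S_INR.
pose proof (pos_INR n); field; lra.
Qed.

Lemma asin_coef_euler (y : R) :
  Rabs y < 1 ->
  PSeries asin_coef y + 2 * (y * PSeries (PS_derive asin_coef) y) = PSeries cbinom y.
Proof.
intros Hy; apply PSeries_euler_ode;
  [exact (in_CV_radius_of_unit_disk _ _ CV_radius_asin_coef Hy)|].
intros n; unfold asin_coef; pose proof (pos_INR n); field; lra.
Qed.

Lemma asinH_coef_euler (y : R) :
  Rabs y < 1 ->
  PSeries asinH_coef y + 2 * (y * PSeries (PS_derive asinH_coef) y)
  = PSeries lncos_coef y + PSeries asin_coef y.
Proof.
intros Hy; rewrite <- PSeries_plus.
- apply PSeries_euler_ode; [exact (in_CV_radius_of_unit_disk _ _ CV_radius_asinH_coef Hy)|].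
  intros n; unfold asinH_coef, lncos_coef, asin_coef, PS_plus, plus; simpl.
  pose proof (pos_INR n); field; lra.
- exact (ex_pseries_of_unit_disk _ _ CV_radius_lncos_coef Hy).
- exact (ex_pseries_of_unit_disk _ _ CV_radius_asin_coef Hy).
Qed.

(** * Closed forms along [y = sin t ^ 2] *)

Lemma sin_sqr_lt_1 (t : R) : -PI/2 < t < PI/2 -> Rabs (sin t ^ 2) < 1.
Proof.
intros Ht; pose proof (cos_gt_0 t ltac:(lra) ltac:(lra)).
pose proof (sin2_cos2 t); unfold Rsqr in *.
rewrite Rabs_pos_eq; nra.
Qed.

Lemma is_derive_PSeries_sin_sqr (a : nat -> R) (t : R) :
  Rbar_le 1 (CV_radius a) -> -PI/2 < t < PI/2 ->
  is_derive (fun t => PSeries a (sin t ^ 2)) t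
    (2 * sin t * cos t * PSeries (PS_derive a) (sin t ^ 2)).
Proof.
intros Ha Ht; eapply is_derive_eq.
- apply (is_derive_comp (PSeries a) (fun t => sin t ^ 2)).
  + apply is_derive_PSeries, in_CV_radius_of_unit_disk, sin_sqr_lt_1; assumption.
  + auto_derive; [exact I | reflexivity].
- unfold scal; simpl; unfold mult; simpl; ring.
Qed.

Lemma cbinom_series_sin_sqr (t : R) :
  -PI/2 < t < PI/2 -> PSeries cbinom (sin t ^ 2) * cos t = 1.
Proof.
intros Ht; pose proof PI_RGT_0.
rewrite (eq_of_is_derive_0 (fun t => PSeries cbinom (sin t ^ 2) * cos t) (-PI/2) (PI/2) t 0);
  [| | exact Ht | lra].
- rewrite sin_0, cos_0, pow_i, PSeries_0, cbinom_0 by lia; ring.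
- intros u Hu; eapply is_derive_eq.
  + apply (is_derive_mult (fun t => PSeries cbinom (sin t ^ 2)) cos);
      [apply is_derive_PSeries_sin_sqr, Hu; apply CV_radius_cbinom | apply is_derive_cos |].
    intros; apply Rmult_comm.
  + pose proof (cbinom_ode _ (sin_sqr_lt_1 u Hu)) as Hode.
    assert (Hcos : cos u * cos u = 1 - sin u ^ 2)
      by (pose proof (sin2_cos2 u); unfold Rsqr in *; lra).
    set (y := sin u ^ 2) in *; unfold plus, mult; simpl.
    transitivity (2 * sin u * ((cos u * cos u) * PSeries (PS_derive cbinom) y)
                  - sin u * PSeries cbinom y); [ring|].
    rewrite Hcos, Hode; field.
Qed.

Lemma asin_series_sin_sqr (t : R) :
  -PI/2 < t < PI/2 -> sin t * PSeries asin_coef (sin t ^ 2) = t.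
Proof.
intros Ht; pose proof PI_RGT_0.
enough (E : sin t * PSeries asin_coef (sin t ^ 2) - t = sin 0 * PSeries asin_coef (sin 0 ^ 2) - 0)
  by (rewrite sin_0, Rmult_0_l in E; lra).
apply (eq_of_is_derive_0 (fun t => sin t * PSeries asin_coef (sin t ^ 2) - t) (-PI/2) (PI/2));
  [| exact Ht | lra].
intros u Hu; eapply is_derive_eq.
- apply (is_derive_minus (fun t => sin t * PSeries asin_coef (sin t ^ 2)) (fun t => t));
    [|apply is_derive_id].
  apply (is_derive_mult sin (fun t => PSeries asin_coef (sin t ^ 2)));
    [apply is_derive_sin | apply is_derive_PSeries_sin_sqr, Hu; apply CV_radius_asin_coef |].
  intros; apply Rmult_comm.
- pose proof (asin_coef_euler _ (sin_sqr_lt_1 u Hu)) as Heuler.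
  pose proof (cbinom_series_sin_sqr u Hu) as Hcbinom.
  set (y := sin u ^ 2) in *; unfold minus, plus, opp, mult, one; simpl.
  transitivity (cos u * (PSeries asin_coef y + 2 * (y * PSeries (PS_derive asin_coef) y)) - 1);
    [unfold y; ring|].
  rewrite Heuler, Rmult_comm, Hcbinom; ring.
Qed.

Lemma lncos_series_sin_sqr (t : R) :
  -PI/2 < t < PI/2 -> PSeries lncos_coef (sin t ^ 2) * cos t = - ln (cos t).
Proof.
intros Ht; pose proof PI_RGT_0.
enough (E : PSeries lncos_coef (sin t ^ 2) * cos t + ln (cos t)
            = PSeries lncos_coef (sin 0 ^ 2) * cos 0 + ln (cos 0)).
{ rewrite sin_0, cos_0, ln_1, pow_i, PSeries_0 in E by lia.
  replace (lncos_coef 0) with 0 in E by (symmetry; apply Rmult_0_r); lra. }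
apply (eq_of_is_derive_0 (fun t => PSeries lncos_coef (sin t ^ 2) * cos t + ln (cos t))
         (-PI/2) (PI/2)); [| exact Ht | lra].
intros u Hu; pose proof (cos_gt_0 u ltac:(lra) ltac:(lra)) as Hcos_pos.
eapply is_derive_eq.
- apply (is_derive_plus (fun t => PSeries lncos_coef (sin t ^ 2) * cos t) (fun t => ln (cos t))).
  + apply (is_derive_mult (fun t => PSeries lncos_coef (sin t ^ 2)) cos);
      [apply is_derive_PSeries_sin_sqr, Hu; apply CV_radius_lncos_coef | apply is_derive_cos |].
    intros; apply Rmult_comm.
  + apply (is_derive_comp ln cos); [apply is_derive_ln, Hcos_pos | apply is_derive_cos].
- pose proof (lncos_coef_ode _ (sin_sqr_lt_1 u Hu)) as Hode.
  pose proof (cbinom_series_sin_sqr u Hu) as Hcbinom.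
  assert (Hcos : cos u * cos u = 1 - sin u ^ 2)
    by (pose proof (sin2_cos2 u); unfold Rsqr in *; lra).
  set (y := sin u ^ 2) in *; unfold plus, mult, scal; simpl; unfold mult; simpl.
  transitivity (2 * sin u * ((cos u * cos u) * PSeries (PS_derive lncos_coef) y)
                - sin u * PSeries lncos_coef y - sin u / cos u); [field; lra|].
  rewrite Hcos, Hode.
  replace (PSeries cbinom y) with (/ cos u)
    by (apply (Rmult_eq_reg_r (cos u)); [rewrite Hcbinom, Rinv_l | ]; lra).
  field; lra.
Qed.

(** * Euler's evaluation *)

Definition asinH_gen (t : R) : R := sin t * PSeries asinH_coef (sin t ^ 2).

Lemma is_derive_asinH_gen (t : R) :
  -PI/2 < t < PI/2 ->
  is_derive asinH_gen t (- ln (cos t) + cos t * PSeries asin_coef (sin t ^ 2)).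
Proof.
intros Ht; eapply is_derive_eq.
- apply (is_derive_mult sin (fun t => PSeries asinH_coef (sin t ^ 2)));
    [apply is_derive_sin | apply is_derive_PSeries_sin_sqr, Ht; apply CV_radius_asinH_coef |].
  intros; apply Rmult_comm.
- pose proof (asinH_coef_euler _ (sin_sqr_lt_1 t Ht)) as Heuler.
  rewrite <- (lncos_series_sin_sqr t Ht).
  set (y := sin t ^ 2) in *; unfold plus, mult; simpl.
  transitivity (cos t * (PSeries asinH_coef y + 2 * (y * PSeries (PS_derive asinH_coef) y)));
    [unfold y; ring|].
  rewrite Heuler; ring.
Qed.

(* The primitive of [- ln (sin (2 t) / 2)] vanishing at [0], the function to which Euler's
   reflection and duplication trick for [int ln sin] applies. *)
Definition Phi (t : R) : R := asinH_gen t - t * ln (sin t).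

Lemma is_derive_Phi (t : R) :
  0 < t < PI/2 -> is_derive Phi t (- ln (sin t) - ln (cos t)).
Proof.
intros Ht; pose proof (sin_gt_0 t ltac:(lra) ltac:(lra)) as Hsin.
eapply is_derive_eq.
- apply (is_derive_minus asinH_gen (fun t => t * ln (sin t)));
    [apply is_derive_asinH_gen; lra | auto_derive; [exact Hsin | reflexivity]].
- pose proof (asin_series_sin_sqr t ltac:(lra)) as Hasin.
  set (B := PSeries asin_coef (sin t ^ 2)) in *; unfold minus, plus, opp; simpl.
  replace (t * (1 * cos t * / sin t)) with (cos t * B); [ring|].
  transitivity (sin t * B * (cos t / sin t)); [field; lra | rewrite Hasin; field; lra].
Qed.

Lemma Phi_reflection (a : R) : 0 < a < PI/2 -> Phi a + Phi (PI/2 - a) = 2 * Phi (PI/4).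
Proof.
intros Ha; pose proof PI_RGT_0.
replace (2 * Phi (PI/4)) with (Phi (PI/4) + Phi (PI/2 - PI/4))
  by (replace (PI/2 - PI/4) with (PI/4) by field; ring).
apply (eq_of_is_derive_0 (fun a => Phi a + Phi (PI/2 - a)) 0 (PI/2)); [| exact Ha | lra].
intros u Hu; eapply is_derive_eq.
- apply (is_derive_plus Phi (fun a => Phi (PI/2 - a))); [apply is_derive_Phi, Hu|].
  apply (is_derive_comp Phi (fun a => PI/2 - a)); [apply is_derive_Phi; lra|].
  auto_derive; [exact I | reflexivity].
- unfold plus, scal; simpl; unfold mult; simpl.
  rewrite sin_shift, cos_shift; ring.
Qed.

Lemma ln_sin_plus_ln_cos (x : R) :
  0 < x < PI/2 -> ln (sin x) + ln (cos x) = ln (sin (2 * x)) - ln 2.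
Proof.
intros Hx; pose proof (sin_gt_0 x ltac:(lra) ltac:(lra)).
pose proof (cos_gt_0 x ltac:(lra) ltac:(lra)).
rewrite sin_2a, !ln_mult; try lra; apply Rmult_lt_0_compat; lra.
Qed.

Lemma Phi_duplication (a : R) :
  0 < a < PI/2 ->
  Phi a - Phi (PI/2 - a) = 4 * Phi (a/2) - 4 * Phi (PI/4 - a/2) + (PI - 4 * a) * ln 2.
Proof.
intros Ha; pose proof PI_RGT_0.
enough (E : Phi a - 2 * Phi (a/2) + 2 * Phi (PI/4 - a/2) + (2 * a - PI/2) * ln 2
            = Phi (PI/2 - a) - 2 * Phi ((PI/2 - a)/2) + 2 * Phi (PI/4 - (PI/2 - a)/2)
              + (2 * (PI/2 - a) - PI/2) * ln 2).
{ replace ((PI/2 - a)/2) with (PI/4 - a/2) in E by field.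
  replace (PI/4 - (PI/4 - a/2)) with (a/2) in E by field; lra. }
apply (eq_of_is_derive_0
         (fun t => Phi t - 2 * Phi (t/2) + 2 * Phi (PI/4 - t/2) + (2 * t - PI/2) * ln 2)
         0 (PI/2)); [| exact Ha | lra].
intros u Hu; auto_derive.
{ repeat split; eexists; apply is_derive_Phi; lra. }
change (fun x : R => Phi x) with Phi.
rewrite (is_derive_unique _ _ _ (is_derive_Phi u Hu)).
replace (u * / 2) with (u/2) by reflexivity.
replace (PI/4 + - (u/2)) with (PI/4 - u/2) by ring.
rewrite (is_derive_unique _ _ _ (is_derive_Phi (u/2) ltac:(lra))).
rewrite (is_derive_unique _ _ _ (is_derive_Phi (PI/4 - u/2) ltac:(lra))).
pose proof (ln_sin_plus_ln_cos (u/2) ltac:(lra)) as Hhalf.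
pose proof (ln_sin_plus_ln_cos (PI/4 - u/2) ltac:(lra)) as Hcompl.
replace (2 * (u/2)) with u in Hhalf by field.
replace (2 * (PI/4 - u/2)) with (PI/2 - u) in Hcompl by field.
rewrite sin_shift in Hcompl; lra.
Qed.

Lemma filterlim_Phi_at_right_0 : filterlim Phi (at_right 0) (locally 0).
Proof.
pose proof PI_RGT_0.
apply (filterlim_ext (fun a => asinH_gen a + -1 * (a * ln (sin a)))); [intros a; unfold Phi; ring|].
replace (locally 0) with (locally (asinH_gen 0 + -1 * 0))
  by (unfold asinH_gen; rewrite sin_0; f_equal; ring).
apply filterlim_Rplus.
- apply filterlim_at_right_of_ex_derive; eexists; apply is_derive_asinH_gen; lra.
- apply filterlim_Rmult; [apply filterlim_const | exact filterlim_mul_ln_sin_at_right_0].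
Qed.

Lemma Phi_pi4 : Phi (PI/4) = PI/2 * ln 2.
Proof.
pose proof PI_RGT_0.
set (g := fun a => 2 * Phi a + -4 * Phi (a/2) + (4 * Phi (PI/4 - a/2) + (4 * a - PI) * ln 2)).
assert (Hconst : filterlim g (at_right 0) (locally (2 * Phi (PI/4)))).
{ apply (filterlim_ext_loc (fun _ => 2 * Phi (PI/4))); [|apply filterlim_const].
  apply (filter_imp (fun a => 0 < a < 0 + PI/2)); [|apply at_right_interval; lra].
  intros a Ha; pose proof (Phi_reflection a ltac:(lra)); pose proof (Phi_duplication a ltac:(lra)).
  unfold g; lra. }
assert (Hlim : filterlim g (at_right 0) (locally (2 * 0 + -4 * 0 + (4 * Phi (PI/4) - PI * ln 2)))).
{ unfold g; apply filterlim_Rplus; [apply filterlim_Rplus|].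
  - apply filterlim_Rmult; [apply filterlim_const | exact filterlim_Phi_at_right_0].
  - apply filterlim_Rmult; [apply filterlim_const|].
    exact (filterlim_comp _ _ _ _ _ _ _ _ filterlim_half_at_right_0 filterlim_Phi_at_right_0).
  - replace (4 * Phi (PI/4) - PI * ln 2) with (4 * Phi (PI/4 - 0/2) + (4 * 0 - PI) * ln 2)
      by (replace (PI/4 - 0/2) with (PI/4) by field; ring).
    apply (filterlim_at_right_of_ex_derive (fun a => 4 * Phi (PI/4 - a/2) + (4 * a - PI) * ln 2)).
    auto_derive; eexists; apply is_derive_Phi; lra. }
pose proof (filterlim_locally_unique _ _ _ Hconst Hlim); lra.
Qed.

Lemma filterlim_asinH_gen_at_pi2 :
  filterlim (fun a => asinH_gen (PI/2 - a)) (at_right 0) (locally (PI * ln 2)).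
Proof.
pose proof PI_RGT_0.
apply (filterlim_ext_loc (fun a => (2 * Phi (PI/4) + (PI/2 - a) * ln (cos a)) + -1 * Phi a)).
{ apply (filter_imp (fun a => 0 < a < 0 + PI/2)); [|apply at_right_interval; lra].
  intros a Ha; rewrite <- (Phi_reflection a) by lra.
  unfold Phi at 2; rewrite sin_shift; ring. }
replace (PI * ln 2) with ((2 * Phi (PI/4) + (PI/2 - 0) * ln (cos 0)) + -1 * 0)
  by (rewrite Phi_pi4, cos_0, ln_1; field).
apply filterlim_Rplus.
- apply (filterlim_at_right_of_ex_derive (fun a => 2 * Phi (PI/4) + (PI/2 - a) * ln (cos a))).
  auto_derive; rewrite cos_0; lra.
- apply filterlim_Rmult; [apply filterlim_const | exact filterlim_Phi_at_right_0].
Qed.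

Lemma filterlim_cos_sqr_at_right_0 : filterlim (fun a => cos a ^ 2) (at_right 0) (at_left 1).
Proof.
pose proof PI_RGT_0.
intros P [d Hd]; unfold filtermap.
assert (Hcont := filterlim_at_right_of_ex_derive (fun a => cos a ^ 2) 0
                   ltac:(auto_derive; exact I)).
cbv beta in Hcont; rewrite cos_0, pow1 in Hcont.
apply (filter_imp (fun a => ball 1 d (cos a ^ 2) /\ 0 < a < 0 + PI/2)).
- intros a [Hball Ha]; apply (Hd (cos a ^ 2) Hball).
  pose proof (sin_gt_0 a ltac:(lra) ltac:(lra)); pose proof (sin2_cos2 a); unfold Rsqr in *; nra.
- apply filter_and; [apply Hcont, locally_ball | apply at_right_interval; lra].
Qed.

Lemma asinH_coef_series : infinite_sum asinH_coef (PI * ln 2).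
Proof.
pose proof PI_RGT_0.
apply (infinite_sum_of_Abel_limit (F := at_right 0) asinH_coef (fun a => cos a ^ 2)).
- intros n; unfold asinH_coef, Rdiv; pose proof (cbinom_pos n); pose proof (oddH_bounds (S n)).
  pose proof (inv_odd_bounds n); apply Rmult_le_pos; nra.
- exact CV_radius_asinH_coef.
- exact filterlim_cos_sqr_at_right_0.
- apply (filterlim_ext_loc (fun a => asinH_gen (PI/2 - a) * / cos a)).
  { apply (filter_imp (fun a => 0 < a < 0 + PI/2)); [|apply at_right_interval; lra].
    intros a Ha; pose proof (cos_gt_0 a ltac:(lra) ltac:(lra)).
    unfold asinH_gen; rewrite sin_shift; field; lra. }
  replace (PI * ln 2) with (PI * ln 2 * / cos 0) by (rewrite cos_0; field).
  apply filterlim_Rmult; [exact filterlim_asinH_gen_at_pi2|].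
  apply (filterlim_at_right_of_ex_derive (fun a => / cos a)).
  auto_derive; rewrite cos_0; lra.
Qed.

(** * The Pochhammer ratio [(2)_k / (5/2)_k] *)

Lemma poch_pos (a : R) (k : nat) : 0 < a -> 0 < poch a k.
Proof.
intros Ha; induction k as [|k IH]; simpl; [lra|].
pose proof (pos_INR k); apply Rmult_lt_0_compat; lra.
Qed.

Lemma poch_1 (m : nat) : poch 1 m = INR (fact m).
Proof.
induction m as [|m IH]; [reflexivity|].
simpl poch; rewrite IH, fact_simpl, mult_INR, S_INR; ring.
Qed.

Lemma poch_2 (m : nat) : poch 2 m = INR (fact (S m)).
Proof.
induction m as [|m IH]; [simpl; ring|].
simpl poch; rewrite IH, (fact_simpl (S m)), mult_INR, !S_INR; ring.
Qed.

Definition poch_ratio (k : nat) : R := poch 2 k / poch (5/2) k.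

Lemma poch_ratio_pos (k : nat) : 0 < poch_ratio k.
Proof. apply Rdiv_lt_0_compat; apply poch_pos; lra. Qed.

Lemma poch_ratio_S (k : nat) : poch_ratio (S k) * (INR k + 5/2) = poch_ratio k * (INR k + 2).
Proof.
unfold poch_ratio; simpl poch.
pose proof (pos_INR k); pose proof (poch_pos (5/2) k ltac:(lra)).
field; lra.
Qed.

Lemma poch_ratio_closed (k : nat) :
  poch_ratio k = 3 * (INR k + 1) / ((2 * INR k + 1) * (2 * INR k + 3) * cbinom k).
Proof.
induction k as [|k IH]; [unfold poch_ratio; rewrite cbinom_0; simpl; field|].
pose proof (pos_INR k); pose proof (cbinom_pos k).
apply (Rmult_eq_reg_r (INR k + 5/2)); [|lra].
rewrite poch_ratio_S, IH, cbinom_S, S_INR; field; lra.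
Qed.

Definition inv_odd_cbinom (k : nat) : R := / ((2 * INR k + 1) * cbinom k).

Lemma inv_odd_cbinom_pos (k : nat) : 0 < inv_odd_cbinom k.
Proof.
pose proof (pos_INR k); pose proof (cbinom_pos k).
apply Rinv_0_lt_compat, Rmult_lt_0_compat; lra.
Qed.

Lemma poch_ratio_telescope (m : nat) :
  poch_ratio m / (INR m + 1) = 3 * (inv_odd_cbinom m - inv_odd_cbinom (S m)).
Proof.
rewrite poch_ratio_closed; unfold inv_odd_cbinom; rewrite cbinom_S, S_INR.
pose proof (pos_INR m); pose proof (cbinom_pos m); field; lra.
Qed.

Lemma poch_ratio_step (n m : nat) :
  (INR n + 1) * (poch_ratio (m + n) / (INR m + 1))
  - (INR n + 3/2) * (poch_ratio (m + S n) / (INR m + 1))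
  = poch_ratio (S (m + n)) - poch_ratio (m + n).
Proof.
rewrite <- plus_n_Sm; pose proof (poch_ratio_S (m + n)) as Hrec.
rewrite plus_INR in *; pose proof (pos_INR m); pose proof (pos_INR n).
apply (Rmult_eq_reg_r (INR m + 1)); [|lra].
field_simplify; [|lra..].
nra.
Qed.

Lemma cbinom_sqr_lower (k : nat) : 1 <= cbinom k ^ 2 * (4 * INR k + 1).
Proof.
induction k as [|k IH]; [rewrite cbinom_0; simpl; lra|].
rewrite cbinom_S, S_INR; pose proof (pos_INR k); pose proof (cbinom_pos k).
replace ((cbinom k * (2 * INR k + 1) / (2 * INR k + 2)) ^ 2 * (4 * (INR k + 1) + 1))
  with (cbinom k ^ 2 * (4 * INR k + 1) + cbinom k ^ 2 / (2 * INR k + 2) ^ 2) by (field; lra).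
assert (0 <= cbinom k ^ 2 / (2 * INR k + 2) ^ 2)
  by (apply Rdiv_le_0_compat; [apply pow2_ge_0 | apply pow_lt; lra]).
lra.
Qed.

Lemma inv_odd_cbinom_sqr_le (k : nat) : inv_odd_cbinom k ^ 2 <= 2 / (2 * INR k + 1).
Proof.
pose proof (pos_INR k); pose proof (cbinom_pos k); pose proof (cbinom_sqr_lower k).
unfold inv_odd_cbinom; rewrite pow_inv.
apply (Rmult_le_reg_r (((2 * INR k + 1) * cbinom k) ^ 2)); [apply pow_lt; nra|].
rewrite Rinv_l by (apply pow_nonzero; nra).
replace (2 / (2 * INR k + 1) * ((2 * INR k + 1) * cbinom k) ^ 2)
  with (2 * (2 * INR k + 1) * cbinom k ^ 2) by (field; lra).
nra.
Qed.

Lemma inv_odd_cbinom_lim : is_lim_seq inv_odd_cbinom 0.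
Proof.
assert (Hbound : is_lim_seq (fun k => 2 / (2 * INR k + 1)) 0).
{ apply (is_lim_seq_ext (fun k => / (INR k + / 2))).
  { intros k; pose proof (pos_INR k); field; lra. }
  replace (Finite 0) with (Rbar_inv p_infty) by reflexivity.
  apply is_lim_seq_inv; [|discriminate].
  eapply is_lim_seq_plus; [apply is_lim_seq_INR | apply is_lim_seq_const | reflexivity]. }
assert (Hsqr : is_lim_seq (fun k => inv_odd_cbinom k ^ 2) 0).
{ apply (is_lim_seq_le_le (fun _ => 0) _ (fun k => 2 / (2 * INR k + 1)));
    [| apply is_lim_seq_const | exact Hbound].
  intros k; split; [apply pow2_ge_0 | apply inv_odd_cbinom_sqr_le]. }
rewrite <- sqrt_0.
apply (is_lim_seq_ext (fun k => sqrt (inv_odd_cbinom k ^ 2))).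
{ intros k; apply sqrt_pow2, Rlt_le, inv_odd_cbinom_pos. }
apply is_lim_seq_continuous; [apply continuity_pt_sqrt; lra | exact Hsqr].
Qed.

Lemma poch_ratio_lim : is_lim_seq poch_ratio 0.
Proof.
apply (is_lim_seq_le_le (fun _ => 0) _ (fun k => 3 / 2 * inv_odd_cbinom k)).
- intros k; pose proof (poch_ratio_pos k); pose proof (inv_odd_cbinom_pos k).
  pose proof (pos_INR k).
  assert (Hfactor : poch_ratio k = 3 * (INR k + 1) / (2 * INR k + 3) * inv_odd_cbinom k).
  { rewrite poch_ratio_closed; unfold inv_odd_cbinom; pose proof (cbinom_pos k); field; lra. }
  assert (3 * (INR k + 1) / (2 * INR k + 3) <= 3 / 2).
  { apply Rmult_le_reg_r with (2 * INR k + 3); [lra|].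
    unfold Rdiv; rewrite Rmult_assoc, Rinv_l; lra. }
  split; [lra | rewrite Hfactor; apply Rmult_le_compat_r; lra].
- apply is_lim_seq_const.
- replace (Finite 0) with (Rbar_mult (3 / 2) 0) by (simpl; f_equal; ring).
  apply is_lim_seq_scal_l, inv_odd_cbinom_lim.
Qed.

(** * Summation by columns *)

Lemma kdf_term_1_1 (m n : nat) :
  kdf_term 1 1 m n = cbinom n ^ 2 * (poch_ratio (m + n) / (INR m + 1)).
Proof.
unfold kdf_term, poch_ratio, cbinom.
rewrite !pow1, (poch_2 m), !poch_1, (fact_simpl m), mult_INR, S_INR.
pose proof (poch_pos (5/2) (m + n) ltac:(lra)); pose proof (INR_fact_neq_0 m).
pose proof (INR_fact_neq_0 n); pose proof (pos_INR m).
field; repeat split; lra.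
Qed.

Definition column_partial (n M : nat) : R :=
  sum_f_R0 (fun m => poch_ratio (m + n) / (INR m + 1)) M.

Definition column_value (n : nat) : R := 3 * oddH (S n) / ((2 * INR n + 1) * cbinom n).

Lemma column_partial_0 (M : nat) : column_partial 0 M = 3 * (1 - inv_odd_cbinom (S M)).
Proof.
unfold column_partial; induction M as [|M IH].
- simpl sum_f_R0; rewrite poch_ratio_telescope; unfold inv_odd_cbinom; rewrite cbinom_0.
  pose proof (cbinom_pos 1); simpl; field; lra.
- rewrite tech5, IH, Nat.add_0_r, poch_ratio_telescope; ring.
Qed.

Lemma column_partial_step (n M : nat) :
  (INR n + 1) * column_partial n M - (INR n + 3/2) * column_partial (S n) M
  = poch_ratio (S (M + n)) - poch_ratio n.
Proof.
unfold column_partial; induction M as [|M IH]; [exact (poch_ratio_step n 0)|].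
pose proof (poch_ratio_step n (S M)) as Hstep; rewrite !Nat.add_succ_l in Hstep.
rewrite !tech5, !Rmult_plus_distr_l, !Nat.add_succ_l; lra.
Qed.

Lemma column_partial_lim (n : nat) : is_lim_seq (column_partial n) (column_value n).
Proof.
induction n as [|n IH].
- apply (is_lim_seq_ext (fun M => 3 * (1 - inv_odd_cbinom (S M)))).
  { intros M; symmetry; apply column_partial_0. }
  replace (column_value 0) with (3 * (1 - 0))
    by (unfold column_value; rewrite cbinom_0; simpl; field).
  apply is_lim_seq_mult'; [apply is_lim_seq_const|].
  apply is_lim_seq_minus'; [apply is_lim_seq_const|].
  exact (proj1 (is_lim_seq_incr_1 _ _) inv_odd_cbinom_lim).
- pose proof (pos_INR n); pose proof (cbinom_pos n).
  apply (is_lim_seq_ext (fun M => ((INR n + 1) * column_partial n M - poch_ratio (S (M + n))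
                                   + poch_ratio n) * / (INR n + 3/2))).
  { intros M; pose proof (column_partial_step n M).
    apply (Rmult_eq_reg_r (INR n + 3/2)); [|lra].
    rewrite Rmult_assoc, Rinv_l; lra. }
  replace (column_value (S n))
    with (((INR n + 1) * column_value n - 0 + poch_ratio n) * / (INR n + 3/2)).
  2: { unfold column_value; rewrite poch_ratio_closed, cbinom_S, !oddH_S, S_INR; field; lra. }
  apply is_lim_seq_mult'; [|apply is_lim_seq_const].
  apply is_lim_seq_plus'; [|apply is_lim_seq_const].
  apply is_lim_seq_minus'; [apply is_lim_seq_mult'; [apply is_lim_seq_const | exact IH]|].
  apply (is_lim_seq_ext (fun M => poch_ratio (M + S n))); [intros M; f_equal; lia|].
  exact (proj1 (is_lim_seq_incr_n _ _ _) poch_ratio_lim).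
Qed.

Lemma kdf_term_1_1_nonneg (m n : nat) : 0 <= kdf_term 1 1 m n.
Proof.
rewrite kdf_term_1_1; pose proof (poch_ratio_pos (m + n)); pose proof (pos_INR m).
apply Rmult_le_pos; [apply pow2_ge_0 | apply Rdiv_le_0_compat; lra].
Qed.

Lemma kdf_column_sum (n : nat) : infinite_sum (fun m => kdf_term 1 1 m n) (3 * asinH_coef n).
Proof.
replace (3 * asinH_coef n) with (cbinom n ^ 2 * column_value n)
  by (unfold column_value, asinH_coef; pose proof (pos_INR n); pose proof (cbinom_pos n);
      field; lra).
apply is_lim_seq_Reals.
apply (is_lim_seq_ext (fun M => cbinom n ^ 2 * column_partial n M)).
{ intros M; unfold column_partial; rewrite scal_sum.
  apply sum_eq; intros m _; rewrite kdf_term_1_1; ring. }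
apply is_lim_seq_mult'; [apply is_lim_seq_const | apply column_partial_lim].
Qed.

Theorem mainTheorem5 :
  infinite_sum (kdf_diag 1 1) (3 * PI * ln 2).
Proof.
apply (infinite_sum_diagonals (kdf_term 1 1) (fun n => 3 * asinH_coef n)).
- exact kdf_term_1_1_nonneg.
- exact kdf_column_sum.
- rewrite Rmult_assoc; apply is_series_Reals.
  exact (is_series_scal_l 3 _ _ (proj2 (is_series_Reals _ _) asinH_coef_series)).
Qed.
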